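(* Let $p,q$ be nonzero polynomials. Then $[p]=[q]$ in $\mathcal H$ if and only if $R(p)=R(q)$ (as multisets).
   Context: Standing assumptions: $\Omega\subset\mathbb C$ is a domain with $0\in\Omega$, $\mathcal H$ is a Hilbert space of analytic functions on $\Omega$ with bounded point evaluations at points of $\Omega$, the shift $(Sf)(z)=zf(z)$ is bounded on $\mathcal H$, and the polynomials $\mathcal P$ are dense in $\mathcal H$. For $g\in\mathcal H$, $[g]$ is the closure in $\mathcal H$ of $\operatorname{span}\{z^kg:k\ge0\}$. A point $\beta\in\mathbb C$ is reproducible of order $m\ge0$ if $p\mapsto p^{(m)}(\beta)$ on $\mathcal P$ extends to a bounded linear functional on $\mathcal H$; $\beta$ is a reproducible point if reproducible of order $0$; reproducibility of order $m$ implies that of all orders $j\le m$; $\operatorname{ro}(\beta)\in\{0,1,\dots\}\cup\{\infty\}$ is the supremum of orders of reproducibility. For a nonzero polynomial $p$, $R(p)$ is the multiset of reproducible zeros: each reproducible point $\beta$ at which $p$ has a zero of order $m\ge1$ is listed $\min\{m,\operatorname{ro}(\beta)+1\}$ times; non-reproducible zeros are omitted. *)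

From HB Require Import structures.
From mathcomp Require Import all_boot all_order all_algebra.
From mathcomp Require Import all_classical all_reals all_analysis.
From mathcomp Require Import complex.
Import Order.TTheory GRing.Theory Num.Theory.
Import numFieldNormedType.Exports.

Set Implicit Arguments.
Unset Strict Implicit.
Unset Printing Implicit Defensive.

Local Open Scope classical_set_scope.
Local Open Scope ring_scope.

Definition CC (R : realType) : numClosedFieldType := R[i].

(** A domain: nonempty (here 0 ∈ Ω is assumed separately), open, connected. *)
Definition is_domain (R : realType) (Om : set (CC R)) : Prop :=
  open Om /\ connected Om.

Definition analytic_on (R : realType) (Om : set (CC R)) (f : CC R -> CC R) : Prop :=
  forall z0, Om z0 ->
    exists r : CC R, 0 < r /\
    exists a : nat -> CC R,
      forall z, Om z -> `|z - z0| < r ->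
        (fun n : nat => \sum_(k < n) a k * (z - z0) ^+ k) @ \oo --> f z.

Definition inner_product (R : realType) (V : lmodType (CC R))
    (ip : V -> V -> CC R) : Prop :=
  [/\ (forall (a : CC R) (x y z : V), ip (a *: x + y) z = a * ip x z + ip y z),
      (forall x y : V, ip y x = (ip x y)^*),
      (forall x : V, 0 <= ip x x) &
      (forall x : V, ip x x = 0 -> x = 0)].

(** The induced norm ||x|| = sqrt <x,x> (a nonnegative real, stored in CC R). *)
Definition hnorm (R : realType) (V : lmodType (CC R)) (ip : V -> V -> CC R)
    (x : V) : CC R := sqrtC (ip x x).

Definition ip_complete (R : realType) (V : lmodType (CC R))
    (ip : V -> V -> CC R) : Prop :=
  forall u : nat -> V,
    (forall e : CC R, 0 < e -> exists N : nat, forall m n : nat,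
        (N <= m)%N -> (N <= n)%N -> hnorm ip (u m - u n) < e) ->
    exists l : V, forall e : CC R, 0 < e -> exists N : nat, forall n : nat,
        (N <= n)%N -> hnorm ip (u n - l) < e.

Definition represents (R : realType) (Om : set (CC R)) (V : lmodType (CC R))
    (ev : V -> CC R -> CC R) (f : V) (p : {poly CC R}) : Prop :=
  forall z, Om z -> ev f z = p.[z].

(** H is the Hilbert space (V, ip) (complete inner
    product space over CC R); its elements are functions on Om via ev, which
    is linear and injective (as maps on Om), every element is analytic on Om,
    point evaluations at points of Om are bounded; S is the shift
    (Sf)(z) = z f(z), which maps H to H and is bounded; the polynomials
    belong to H and are dense in H. *)
Definition standing_assumptions (R : realType) (Om : set (CC R))
    (V : lmodType (CC R)) (ip : V -> V -> CC R) (ev : V -> CC R -> CC R)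
    (S : V -> V) : Prop :=
  [/\ (is_domain Om /\ Om 0) /\ (inner_product ip /\ ip_complete ip),
      ((forall (a : CC R) (f g : V) z, Om z -> ev (a *: f + g) z = a * ev f z + ev g z)
       /\ (forall f : V, (forall z, Om z -> ev f z = 0) -> f = 0)),
      ((forall f : V, analytic_on Om (ev f))
       /\ (forall z, Om z -> exists M : CC R, forall f : V, `|ev f z| <= M * hnorm ip f)),
      ((forall (f : V) z, Om z -> ev (S f) z = z * ev f z)
       /\ (exists M : CC R, forall f : V, hnorm ip (S f) <= M * hnorm ip f)) &
      ((forall p : {poly CC R}, exists f : V, represents Om ev f p)
       /\ (forall (f : V) (e : CC R), 0 < e ->
            exists (p : {poly CC R}) (g : V),
              represents Om ev g p /\ hnorm ip (f - g) < e))].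

(** [g] : closure in H of span{ z^k g : k >= 0 } = closure of { r(S) g : r polynomial }. *)
Definition cyc (R : realType) (V : lmodType (CC R)) (ip : V -> V -> CC R)
    (S : V -> V) (g : V) : set V :=
  fun x => forall e : CC R, 0 < e ->
    exists r : {poly CC R},
      hnorm ip (x - \sum_(k < size r) r`_k *: iter k S g) < e.

Definition reproducible (R : realType) (Om : set (CC R)) (V : lmodType (CC R))
    (ip : V -> V -> CC R) (ev : V -> CC R -> CC R) (beta : CC R) (m : nat) : Prop :=
  exists L : V -> CC R,
    [/\ (forall (a : CC R) (x y : V), L (a *: x + y) = a * L x + L y),
        (exists M : CC R, forall x : V, `|L x| <= M * hnorm ip x) &
        (forall (p : {poly CC R}) (f : V), represents Om ev f p ->
            L f = (p^`(m)).[beta])].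

(** ro(beta) >= n, where ro(beta) = sup of orders of reproducibility. *)
Definition ro_ge (R : realType) (Om : set (CC R)) (V : lmodType (CC R))
    (ip : V -> V -> CC R) (ev : V -> CC R -> CC R) (beta : CC R) (n : nat) : Prop :=
  exists j : nat, (n <= j)%N /\ reproducible Om ip ev beta j.

(** Multiplicity of beta in the multiset R(p): if beta is a reproducible point
    and p has a zero of order m = mup beta p at beta, it is
    min(m, ro(beta)+1) = #{ n < m | ro(beta) >= n }; otherwise 0
    (for m = 0 the count is 0, i.e. non-zeros are not listed). *)
Definition Rmult (R : realType) (Om : set (CC R)) (V : lmodType (CC R))
    (ip : V -> V -> CC R) (ev : V -> CC R -> CC R) (p : {poly CC R})
    (beta : CC R) : nat :=
  if `[< reproducible Om ip ev beta 0 >] then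
    (\sum_(n < mup beta p) (`[< ro_ge Om ip ev beta n >] : nat))%N
  else 0%N.

From HB Require Import structures.
From mathcomp Require Import all_boot all_order all_algebra.
From mathcomp Require Import all_classical all_reals all_analysis.
From mathcomp Require Import complex.
From mathcomp Require Import ring lra zify.
Import Order.TTheory GRing.Theory Num.Theory.
Import numFieldNormedType.Exports.
Local Open Scope classical_set_scope.
Local Open Scope ring_scope.
Set Implicit Arguments.
Unset Strict Implicit.
Unset Printing Implicit Defensive.

(* Polynomials embed linearly in H (polyH u is the element represented by u)
   and S acts on them as multiplication by 'X, so [f] is the closure pclos u
   of {r u : r polynomial} when f represents u.

   (=>) If R(q) lists b fewer times than R(p), say k times, then b is
   reproducible of order k = mup b q, and the bounded functional reproducing
   u |-> u^(k)(b) kills every r p (zero of order > k at b), hence kills [p],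
   but not q; so q is not in [p].
   (<=) Factor p = c * g_s * g_t where s is the multiset R(p) and every root b
   in t is not reproducible of order count b s.  Key lemma: such a b satisfies
   g_s in [g_s ('X - b)].  Otherwise g_s is at distance e > 0 from
   {r g_s ('X - b)}, which bounds |r(b)| e by ||r g_s||; combined with Hermite
   interpolation modulo g_s by bounded functionals (available because s is
   reproducible to the required orders) this bounds u |-> u^(m)(b) on the
   polynomials, and its extension by continuity makes b reproducible of
   order m.  Hence [p] = [g_s], which depends only on R(p). *)

Section DiscCenters.
Variable R : realType.

(* Helly in dimension one: intervals [x u - d u, x u + d u] meeting pairwise
   have a common point (the supremum of their left ends). *)
Lemma interval_center (T : Type) (t0 : T) (x d : T -> R) :
  (forall u v, x u - x v <= d u + d v) -> exists c, forall u, `|x u - c| <= d u.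
Proof.
move=> H.
pose E := fun r : R => exists u, r = x u - d u.
have ub v : ubound E (x v + d v) by move=> r [u ->]; have := H u v; lra.
have hs : has_sup E by split; [exists (x t0 - d t0), t0 | exists (x t0 + d t0)].
exists (sup E) => u; rewrite ler_norml; apply/andP; split.
- have : sup E <= x u + d u by apply: ge_sup (ub u); case: hs.
  lra.
- have : x u - d u <= sup E by apply: sup_upper_bound => //; exists u.
  lra.
Qed.

Lemma Re_le_norm (z : R[i]) : (complex.Re z)%:C%C <= `|z|.
Proof.
rewrite normc_def lecR; apply: le_trans (ler_norm _) _.
by rewrite -sqrtr_sqr ler_sqrt ?addr_ge0 ?sqr_ge0 // lerDl sqr_ge0.
Qed.

Lemma Im_le_norm (z : R[i]) : (complex.Im z)%:C%C <= `|z|.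
Proof.
rewrite normc_def lecR; apply: le_trans (ler_norm _) _.
by rewrite -sqrtr_sqr ler_sqrt ?addr_ge0 ?sqr_ge0 // lerDr sqr_ge0.
Qed.

(* Complex version: discs D(a u, d u) meeting pairwise all meet the common
   point c once their radii are doubled (apply the real version to both
   coordinates). *)
Lemma disc_center (T : Type) (t0 : T) (a d : T -> R[i]) :
  (forall u, 0 <= d u) -> (forall u v, `|a u - a v| <= d u + d v) ->
  exists c, forall u, `|a u - c| <= 2 * d u.
Proof.
move=> d0 H.
pose r u := complex.Re (d u).
have dE u : d u = (r u)%:C%C by rewrite RRe_real // ger0_real.
have r0 u : 0 <= r u by rewrite -lecR -dE.
have coord (f : R[i] -> R) : (forall z, (f z)%:C%C <= `|z|) ->
    (forall z w, f z - f w = f (z - w)) -> exists c, forall u, `|f (a u) - c| <= r u.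
  move=> f_le fB; apply: (interval_center t0) => u v; rewrite -lecR fB.
  have -> : (r u + r v)%:C%C = d u + d v by rewrite (dE u) (dE v) rmorphD.
  exact: le_trans (f_le _) (H u v).
have [cx hx] := coord _ Re_le_norm (fun '(Complex _ _) '(Complex _ _) => erefl).
have [cy hy] := coord _ Im_le_norm (fun '(Complex _ _) '(Complex _ _) => erefl).
exists (Complex cx cy) => u.
have -> : 2 * d u = (2 * r u)%:C%C by rewrite dE rmorphM /= rmorph_nat.
rewrite normc_def lecR.
have := hx u; have := hy u; have := r0 u.
case: (a u) => ar ai /=; set X := ar - cx; set Y := ai - cy => ru hY hX.
rewrite -[2 * r u]ger0_norm ?mulr_ge0 // -sqrtr_sqr ler_sqrt ?sqr_ge0 //.
have hX2 : X ^+ 2 <= r u ^+ 2 by rewrite -real_normK ?num_real // lerXn2r ?nnegrE.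
have hY2 : Y ^+ 2 <= r u ^+ 2 by rewrite -real_normK ?num_real // lerXn2r ?nnegrE.
nra.
Qed.

End DiscCenters.

Section InnerProductSpace.
Variables (R : realType) (V : lmodType (CC R)) (ip : V -> V -> CC R).
Hypothesis ip_inner : inner_product ip.
Local Notation N := (hnorm ip).

Lemma ipDZl a x y z : ip (a *: x + y) z = a * ip x z + ip y z.
Proof. by case: ip_inner. Qed.
Lemma ip_conj x y : ip y x = (ip x y)^*.
Proof. by case: ip_inner. Qed.
Lemma ip_ge0 x : 0 <= ip x x.
Proof. by case: ip_inner. Qed.
Lemma ip_eq0 x : ip x x = 0 -> x = 0.
Proof. by case: ip_inner => _ _ _; apply. Qed.

Lemma ipDl x y z : ip (x + y) z = ip x z + ip y z.
Proof. by rewrite -[x]scale1r ipDZl mul1r scale1r. Qed.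
Lemma ip0l z : ip 0 z = 0.
Proof. by apply: (addrI (ip 0 z)); rewrite -ipDl !addr0. Qed.
Lemma ipZl a x z : ip (a *: x) z = a * ip x z.
Proof. by rewrite -[a *: x]addr0 ipDZl ip0l addr0. Qed.
Lemma ipBl x y z : ip (x - y) z = ip x z - ip y z.
Proof. by rewrite ipDl -scaleN1r ipZl mulN1r. Qed.
Lemma ipDr x y z : ip z (x + y) = ip z x + ip z y.
Proof. by rewrite (ip_conj (x + y)) ipDl rmorphD (ip_conj x z) (ip_conj y z). Qed.
Lemma ipZr a x z : ip z (a *: x) = a^* * ip z x.
Proof. by rewrite (ip_conj (a *: x)) ipZl rmorphM (ip_conj x z). Qed.
Lemma ipBr x y z : ip z (x - y) = ip z x - ip z y.
Proof. by rewrite (ip_conj (x - y)) ipBl rmorphB (ip_conj x z) (ip_conj y z). Qed.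
Lemma ip0r z : ip z 0 = 0.
Proof. by rewrite (ip_conj 0) ip0l rmorph0. Qed.

Lemma hnorm_ge0 x : 0 <= N x.
Proof. by rewrite /hnorm sqrtC_ge0 ip_ge0. Qed.
Lemma hnorm_real x : N x \is Num.real.
Proof. exact/ger0_real/hnorm_ge0. Qed.
Lemma hnorm0 : N 0 = 0.
Proof. by rewrite /hnorm ip0l sqrtC0. Qed.
Lemma hnorm_sqr x : N x ^+ 2 = ip x x.
Proof. by rewrite /hnorm sqrtCK. Qed.

Lemma hnormZ a x : N (a *: x) = `|a| * N x.
Proof.
rewrite /hnorm ipZl ipZr mulrA -normCK sqrtCM ?sqrCK //.
all: by rewrite ?qualifE /= ?exprn_ge0 ?ip_ge0.
Qed.
Lemma hnormN x : N (- x) = N x.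
Proof. by rewrite -scaleN1r hnormZ normrN normr1 mul1r. Qed.

(* Cauchy-Schwarz, from the positivity of <b x - a y, b x - a y> with
   a = <x, y>, b = <y, y>. *)
Lemma cauchy_schwarz_sqr x y : `|ip x y| ^+ 2 <= ip x x * ip y y.
Proof.
have [y0|yn0] := eqVneq (ip y y) 0.
  by rewrite y0 (ip_eq0 y0) ip0r normr0 expr0n /= mulr0.
set b := ip y y; set a := ip x y; set c := ip x x.
have b_gt0 : 0 < b by rewrite lt_def yn0 ip_ge0.
have bJ : b^* = b by rewrite geC0_conj // ip_ge0.
have := ip_ge0 (b *: x - a *: y).
rewrite ipBl !ipBr !ipZl !ipZr -/a -/b -/c (ip_conj x y) -/a bJ.
have -> : b * (b * c) - b * (a^* * a) - (a * (b * a^*) - a * (a^* * b))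
   = b * (b * c - a * a^*) by ring.
by rewrite pmulr_rge0 // subr_ge0 normCK [c * b]mulrC.
Qed.

Lemma cauchy_schwarz x y : `|ip x y| <= N x * N y.
Proof.
have := cauchy_schwarz_sqr x y.
rewrite -ler_sqrtC ?qualifE /= ?exprn_ge0 ?mulr_ge0 ?ip_ge0 // sqrCK //.
by rewrite sqrtCM // qualifE /= ip_ge0.
Qed.

Lemma hnormD_le x y : N (x + y) <= N x + N y.
Proof.
have h2 : ip x y + (ip x y)^* <= (N x * N y) *+ 2.
  have -> : ip x y + (ip x y)^* = 'Re (ip x y) *+ 2 by rewrite ReE; field.
  exact/ler_wMn2r/(le_trans (leif_Re_Creal _).1 (cauchy_schwarz x y)).
have : ip (x + y) (x + y) <= (N x + N y) ^+ 2.
  have -> : ip (x + y) (x + y) = ip x x + ip y y + (ip x y + (ip x y)^*).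
    by rewrite ipDl !ipDr (ip_conj x y); ring.
  have -> : (N x + N y) ^+ 2 = ip x x + ip y y + (N x * N y) *+ 2.
    by rewrite sqrrD !hnorm_sqr; ring.
  by rewrite lerD2l.
have NxNy : 0 <= N x + N y by rewrite addr_ge0 ?hnorm_ge0.
by rewrite -ler_sqrtC ?qualifE /= ?ip_ge0 ?exprn_ge0 // sqrCK.
Qed.

Lemma hnormB_le x y : N (x - y) <= N x + N y.
Proof. by rewrite -(hnormN y) hnormD_le. Qed.

Lemma hnorm_sum_le (I : Type) (r : seq I) (f : I -> V) :
  N (\sum_(i <- r) f i) <= \sum_(i <- r) N (f i).
Proof.
elim: r => [|i r IH]; first by rewrite !big_nil hnorm0.
by rewrite !big_cons; apply: le_trans (hnormD_le _ _) (lerD _ IH).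
Qed.

End InnerProductSpace.

Section TaylorAtRoot.
Variable K : numFieldType.
Implicit Types (v w u : {poly K}) (b : K).

Lemma derivn_XsubCM b v j :
  (('X - b%:P) * v)^`(j.+1) = ('X - b%:P) * v^`(j.+1) + v^`(j) *+ j.+1.
Proof.
elim: j => [|j IH].
  by rewrite derivn1 derivM derivXsubC mul1r derivn0 derivn1 mulr1n addrC.
rewrite derivnS IH derivD derivM derivXsubC mul1r derivMn -!derivnS.
by rewrite [v^`(j.+1) *+ j.+2]mulrS addrCA addrA.
Qed.

Lemma horner_derivn_XsubCM b v j :
  ((('X - b%:P) * v)^`(j.+1)).[b] = j.+1%:R * (v^`(j)).[b].
Proof.
rewrite derivn_XsubCM hornerD hornerM hornerXsubC subrr mul0r add0r.
by rewrite hornerMn mulr_natl.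
Qed.

Lemma derivn_XsubCX_lt b k w j : (j < k)%N ->
  ((('X - b%:P) ^+ k * w)^`(j)).[b] = 0.
Proof.
elim: k j => [//|k IH] [|j] hj.
  by rewrite derivn0 exprS -mulrA hornerM hornerXsubC subrr mul0r.
by rewrite exprS -mulrA horner_derivn_XsubCM IH ?mulr0.
Qed.

Lemma derivn_XsubCX_eq b k w :
  ((('X - b%:P) ^+ k * w)^`(k)).[b] = k`!%:R * w.[b].
Proof.
elim: k => [|k IH]; first by rewrite derivn0 expr0 mul1r fact0 mul1r.
by rewrite exprS -mulrA horner_derivn_XsubCM IH factS natrM mulrA.
Qed.

Lemma dvd_derivn_eq0 b m u j : ('X - b%:P) ^+ m %| u -> (j < m)%N ->
  (u^`(j)).[b] = 0.
Proof. by move=> /dvdpP [w ->] hj; rewrite mulrC derivn_XsubCX_lt. Qed.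

Lemma derivn_mup_mul b g : g != 0 ->
  exists2 c, c != 0 & forall s, ((s * g)^`(mup b g)).[b] = c * s.[b].
Proof.
move=> gn0; set m := mup b g.
have /dvdpP [w gE] : ('X - b%:P) ^+ m %| g by rewrite -mup_geq.
have wb : ~~ root w b.
  apply/negP => /factor_theorem [w1 wE].
  have : ('X - b%:P) ^+ m.+1 %| g by rewrite gE wE -mulrA -exprS dvdp_mull.
  by rewrite -mup_geq // -/m ltnn.
exists (m`!%:R * w.[b]) => [|s].
  by rewrite mulf_neq0 // pnatr_eq0 -lt0n fact_gt0.
by rewrite gE mulrA mulrC derivn_XsubCX_eq hornerM mulrA mulrAC.
Qed.

Lemma derivn_mup_neq0 b g : g != 0 -> (g^`(mup b g)).[b] != 0.
Proof.
move=> /(derivn_mup_mul b) [c cn0 /(_ 1)].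
by rewrite mul1r hornerC mulr1 => ->.
Qed.

Lemma derivn_mod b g c T u :
  (forall s, ((s * g)^`(mup b g)).[b] = c * s.[b]) -> g %| u - T ->
  (u^`(mup b g)).[b] = (T^`(mup b g)).[b] + c * ((u - T) %/ g).[b].
Proof.
move=> hc /divpK uT; have uE : u = (u - T) %/ g * g + T by rewrite uT subrK.
by rewrite {1}uE derivnD hornerD hc addrC.
Qed.

End TaylorAtRoot.

Lemma split_count (T : eqType) (r : seq T) (m : T -> nat) :
  (forall b, (m b <= count_mem b r)%N) ->
  exists s t, perm_eq r (s ++ t) /\ forall b, count_mem b s = m b.
Proof.
elim: r m => [|x r IH] m hm.
  by exists [::], [::]; split => // b; apply/eqP; rewrite eq_sym -leqn0 hm.
pose m' b := if b == x then (m x).-1 else m b.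
have [|s [t [hp hc]]] := IH m'.
  move=> b; have := hm b; rewrite /m' /=.
  by case: (eqVneq b x) => [->|_] /=; lia.
case: (posnP (m x)) => mx0.
- exists s, (x :: t); split.
    by apply/permP => a /=; rewrite count_cat /= (permP hp a) count_cat; lia.
  by move=> b; rewrite hc /m'; case: eqP => [->|//]; rewrite mx0.
- exists (x :: s), t; split; first by rewrite cat_cons perm_cons.
  by move=> b /=; rewrite hc /m'; case: (eqVneq b x) => [->|] /=; lia.
Qed.

Lemma count_downclosed (P : nat -> bool) m :
  (forall n k, (k <= n)%N -> P n -> P k) ->
  let c := (\sum_(n < m) P n)%N in
  [/\ (c <= m)%N, (forall j, (j < c)%N -> P j) & ((c < m)%N -> ~~ P c)].
Proof.
move=> Pdown; elim: m => [|m [le_cm Pbelow Pc]] /=; first by rewrite big_ord0.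
rewrite big_ord_recr /=; set c := (\sum_(n < m) P n)%N in le_cm Pbelow Pc *.
case: (boolP (P m)) => Pm /=; last first.
  rewrite addn0; split=> [|//|lt_cm]; first exact: leqW.
  by move: lt_cm; rewrite ltnS leq_eqVlt => /predU1P [->|/Pc].
have cm : c = m.
  apply/eqP; rewrite eqn_leq le_cm leqNgt; apply/negP => lt_cm.
  by have := Pc lt_cm; rewrite (Pdown m c (ltnW lt_cm) Pm).
rewrite cm addn1 ltnn; split=> // j; rewrite ltnS => le_jm.
exact: Pdown le_jm Pm.
Qed.

Lemma ler_norm_coef (F : numDomainType) (a M n : F) :
  a \is Num.real -> 0 <= n -> a <= M * n -> a <= `|M| * n.
Proof.
move=> ar n0 h.
have Mr : M * n \is Num.real by rewrite -(subrK a (M * n)) rpredD // (lerB_real h).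
by apply: le_trans h (le_trans (real_ler_norm Mr) _); rewrite normrM (ger0_norm n0).
Qed.

Lemma small_factor (F : numFieldType) (K e : F) : 0 <= K -> 0 < e ->
  0 < e / (K + 1) /\ K * (e / (K + 1)) < e.
Proof.
move=> K0 e0; have K1 : 0 < K + 1 by rewrite ltr_wpDl.
split; first by rewrite divr_gt0.
by rewrite mulrA ltr_pdivrMr // mulrDr mulr1 [K * e]mulrC ltrDl.
Qed.

Lemma le0_small (F : numFieldType) (x A : F) : 0 <= A ->
  (forall e, 0 < e -> x <= A * e) -> x <= 0.
Proof.
move=> A0 h; apply/ler_addgt0Pr => e e0; rewrite add0r.
by have [d0 hd] := small_factor A0 e0; exact: le_trans (h _ d0) (ltW hd).
Qed.

Section Setting.
Variables (R : realType) (Om : set (CC R)) (V : lmodType (CC R))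
  (ip : V -> V -> CC R) (ev : V -> CC R -> CC R) (S : V -> V).
Hypothesis HA : standing_assumptions Om ip ev S.
Local Notation C := (CC R).
Local Notation N := (hnorm ip).

Lemma HA_inner : inner_product ip.
Proof. by case: HA => [[_ []]]. Qed.

Lemma ev_linear a f g z : Om z -> ev (a *: f + g) z = a * ev f z + ev g z.
Proof. by case: HA => _ [h _] _ _ _; apply: h. Qed.

Lemma ev_shift f z : Om z -> ev (S f) z = z * ev f z.
Proof. by case: HA => _ _ _ [h _] _; apply: h. Qed.

Lemma ev_inj f g : (forall z, Om z -> ev f z = ev g z) -> f = g.
Proof.
case: HA => _ [_ inj0] _ _ _ fg; apply/eqP; rewrite -subr_eq0; apply/eqP.
apply: inj0 => z zO; rewrite -scaleN1r addrC ev_linear // fg //.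
by rewrite mulN1r addNr.
Qed.

Lemma poly_in_H u : exists f, represents Om ev f u.
Proof. by case: HA => _ _ _ _ [h _]; apply: h. Qed.

Definition polyH (u : {poly C}) : V := projT1 (cid (poly_in_H u)).

Lemma polyH_rep u : represents Om ev (polyH u) u.
Proof. by rewrite /polyH; case: cid. Qed.

Lemma represents_polyH f u : represents Om ev f u -> f = polyH u.
Proof. by move=> h; apply: ev_inj => z zO; rewrite h // polyH_rep. Qed.

Lemma polyH_is_linear : linear polyH.
Proof.
move=> a u w; apply/esym/represents_polyH => z zO.
by rewrite ev_linear // !polyH_rep // hornerD hornerZ.
Qed.

HB.instance Definition _ := GRing.isLinear.Build C {poly C} V *:%R polyH
  polyH_is_linear.

Lemma shift_linear a f g : S (a *: f + g) = a *: S f + S g.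
Proof.
by apply: ev_inj => z zO; rewrite ev_shift // !ev_linear // !ev_shift // mulrDr mulrCA.
Qed.

Lemma polyH_X u : polyH ('X * u) = S (polyH u).
Proof.
by apply/esym/represents_polyH => z zO; rewrite ev_shift // polyH_rep // hornerM hornerX.
Qed.

Lemma polyH_XsubC b u : polyH (('X - b%:P) * u) = S (polyH u) - b *: polyH u.
Proof. by rewrite mulrBl raddfB /= polyH_X mul_polyC linearZ. Qed.

Lemma polyH_Xn k u : polyH ('X^k * u) = iter k S (polyH u).
Proof.
elim: k => [|k IH]; first by rewrite expr0 mul1r.
by rewrite exprS -mulrA polyH_X IH.
Qed.

Lemma polyH_mul r u : polyH (r * u) = \sum_(k < size r) r`_k *: iter k S (polyH u).
Proof.
rewrite -{1}(coefK r) poly_def mulr_suml linear_sum; apply: eq_bigr => k _.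
by rewrite -scalerAl linearZ /= polyH_Xn.
Qed.

Lemma shift_bounded : exists M, forall f, N (S f) <= M * N f.
Proof. by case: HA => _ _ _ [_ h] _. Qed.

Definition shiftK : C := `|projT1 (cid shift_bounded)|.

Lemma shiftK_ge0 : 0 <= shiftK.
Proof. exact: normr_ge0. Qed.

Lemma hnorm_shift f : N (S f) <= shiftK * N f.
Proof.
rewrite /shiftK; case: cid => M hM /=.
exact: ler_norm_coef (hnorm_real HA_inner _) (hnorm_ge0 HA_inner _) (hM f).
Qed.

Lemma hnorm_iter_shift k f : N (iter k S f) <= shiftK ^+ k * N f.
Proof.
elim: k => [|k IH]; first by rewrite expr0 mul1r.
rewrite /= exprS -mulrA; apply: le_trans (hnorm_shift _) _.
by rewrite ler_wpM2l ?shiftK_ge0.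
Qed.

Definition mul_bound (r : {poly C}) : C := \sum_(k < size r) `|r`_k| * shiftK ^+ k.

Lemma mul_bound_ge0 r : 0 <= mul_bound r.
Proof. by apply: sumr_ge0 => k _; rewrite mulr_ge0 ?exprn_ge0 ?shiftK_ge0. Qed.

Lemma hnorm_polyH_mul r u : N (polyH (r * u)) <= mul_bound r * N (polyH u).
Proof.
rewrite polyH_mul mulr_suml; apply: le_trans (hnorm_sum_le HA_inner _ _) _.
apply: ler_sum => k _; rewrite (hnormZ HA_inner) -mulrA ler_wpM2l //.
exact: hnorm_iter_shift.
Qed.

Lemma polyH_dense f e : 0 < e -> exists u, N (f - polyH u) < e.
Proof.
case: HA => _ _ _ _ [_ dense] /(dense f) [u [g [/represents_polyH -> ?]]].
by exists u.
Qed.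

Definition pclos (u : {poly C}) : set V :=
  fun x => forall e, 0 < e -> exists r, N (x - polyH (r * u)) < e.

Lemma cyc_pclos f u : represents Om ev f u -> cyc ip S f = pclos u.
Proof.
move/represents_polyH => ->; apply/funext => x; apply/propext.
by split=> h e /h [r hr]; exists r; rewrite ?polyH_mul // -polyH_mul.
Qed.

Lemma pclos_self u : pclos u (polyH u).
Proof. by move=> e e0; exists 1; rewrite mul1r subrr (hnorm0 HA_inner). Qed.

Lemma pclos_mul v w u : pclos u (polyH w) -> pclos (v * u) (polyH (v * w)).
Proof.
move=> h e e0; have [e'0 he'] := small_factor (mul_bound_ge0 v) e0.
have [r hr] := h _ e'0; exists r.
rewrite mulrCA -raddfB -mulrBr; apply: le_lt_trans (hnorm_polyH_mul _ _) _.
by apply: le_lt_trans he'; rewrite raddfB ler_wpM2l ?mul_bound_ge0 // ltW.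
Qed.

Lemma pclos_trans u w x : pclos u (polyH w) -> pclos w x -> pclos u x.
Proof.
move=> h hx e e0; have e20 : 0 < e / 2 by rewrite divr_gt0.
have [r hr] := hx _ e20; have [r' hr'] := pclos_mul r h e20.
exists (r' * r); rewrite -mulrA -[x](subrK (polyH (r * w))) -addrA.
by apply: le_lt_trans (hnormD_le HA_inner _ _) _; rewrite [e]splitr ltrD.
Qed.

Lemma pclos_eq u w : pclos u (polyH w) -> pclos w (polyH u) -> pclos u = pclos w.
Proof.
by move=> uw wu; apply/funext => x; apply/propext; split; apply: pclos_trans.
Qed.

Lemma pclos_absorb v u : pclos (v * u) (polyH u) -> pclos (v * u) = pclos u.
Proof.
move=> h; apply: pclos_eq h _ => e e0; exists v; by rewrite subrr (hnorm0 HA_inner).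
Qed.

Lemma pclosZ c u : c != 0 -> pclos (c *: u) = pclos u.
Proof.
move=> cn0; rewrite -mul_polyC pclos_absorb // => e e0; exists (c^-1)%:P.
by rewrite mulrA -polyCM mulVf // mul1r subrr (hnorm0 HA_inner).
Qed.

(* Lowering the order: if L realizes p |-> p^(k+1)(b), then
   f |-> L((S - b) f) / (k+1) realizes p |-> p^(k)(b). *)
Lemma reproducible_pred b k :
  reproducible Om ip ev b k.+1 -> reproducible Om ip ev b k.
Proof.
move=> [L [Llin [M hM] Lrep]].
have k0 : k.+1%:R != 0 :> C by rewrite pnatr_eq0.
exists (fun f => L (S f - b *: f) / k.+1%:R); split.
- move=> a x y.
  have -> : S (a *: x + y) - b *: (a *: x + y) = a *: (S x - b *: x) + (S y - b *: y).
    by rewrite shift_linear scalerDr !scalerA [b * a]mulrC opprD addrACA scalerBr scalerA.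
  by rewrite Llin mulrDl mulrA.
- exists (`|M| * (shiftK + `|b|) / `|k.+1%:R|) => x; rewrite normrM normfV.
  rewrite mulrAC ler_pM2r ?invr_gt0 ?normr_gt0 //.
  have h1 : `|L (S x - b *: x)| <= `|M| * N (S x - b *: x).
    exact: ler_norm_coef (normr_real _) (hnorm_ge0 HA_inner _) (hM _).
  apply: le_trans h1 _; rewrite -mulrA ler_wpM2l //.
  apply: le_trans (hnormB_le HA_inner _ _) _.
  by rewrite mulrDl (hnormZ HA_inner) lerD2r hnorm_shift.
- move=> p f /represents_polyH ->.
  by rewrite -polyH_XsubC (Lrep _ _ (polyH_rep _)) horner_derivn_XsubCM mulrC mulKf.
Qed.

Lemma reproducible_le b j k : (k <= j)%N ->
  reproducible Om ip ev b j -> reproducible Om ip ev b k.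
Proof.
elim: j => [|j IH]; first by rewrite leqn0 => /eqP ->.
by rewrite leq_eqVlt ltnS => /predU1P [-> //|hk /reproducible_pred /IH]; apply.
Qed.

Lemma Rmult_spec p b :
  let k := Rmult Om ip ev p b in
  [/\ (k <= mup b p)%N, (forall j, (j < k)%N -> reproducible Om ip ev b j) &
      ((k < mup b p)%N -> ~ reproducible Om ip ev b k)].
Proof.
rewrite /Rmult; case: asboolP => [r0|nr0] /=; last by split.
have down n k : (k <= n)%N -> `[< ro_ge Om ip ev b n >] -> `[< ro_ge Om ip ev b k >].
  move=> kn /asboolP [j [nj rj]]; apply/asboolP; exists j; split=> //.
  exact: leq_trans kn nj.
have [le_km below notc] := count_downclosed (mup b p) down.
split=> // [j /below /asboolP [i [ji ri]]|/notc /asboolP nc rc].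
  exact: reproducible_le ji ri.
by apply: nc; eexists; split; last exact: rc.
Qed.

Definition bounded_fun (l : V -> C) : Prop :=
  exists2 M, 0 <= M & forall f, `|l f| <= M * N f.

Lemma bounded_funP (l : V -> C) M : (forall f, `|l f| <= M * N f) -> bounded_fun l.
Proof.
move=> h; exists `|M| => [|f]; first exact: normr_ge0.
exact: ler_norm_coef (normr_real _) (hnorm_ge0 HA_inner _) (h f).
Qed.

Definition interpolant (d : seq ((V -> C) * {poly C})) (f : V) : {poly C} :=
  \sum_(le <- d) le.1 f *: le.2.

Definition bounded_coefs (d : seq ((V -> C) * {poly C})) : Prop :=
  forall le, List.In le d -> bounded_fun le.1.

Lemma bounded_coefs_weighted d (w : {poly C} -> C) :
  bounded_coefs d -> (forall E, 0 <= w E) ->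
  exists2 M, 0 <= M & forall f, \sum_(le <- d) `|le.1 f| * w le.2 <= M * N f.
Proof.
move=> hd w0; elim: d hd => [|[l E] d IH] hd.
  by exists 0 => // f; rewrite big_nil mul0r.
have [M M0 hM] := hd _ (or_introl erefl).
have [M' M'0 hM'] := IH (fun le dle => hd le (or_intror dle)).
exists (M * w E + M') => [|f]; first by rewrite addr_ge0 ?mulr_ge0.
rewrite big_cons mulrDl lerD // mulrAC ler_wpM2r //.
Qed.

Lemma interpolant_derivn_bounded d b m : bounded_coefs d ->
  bounded_fun (fun f => ((interpolant d f)^`(m)).[b]).
Proof.
move=> /(bounded_coefs_weighted (w := fun E : {poly C} => `|(E^`(m)).[b]|)) [//|M _ hM].
apply: (@bounded_funP _ M) => f; apply: le_trans (hM f).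
rewrite /interpolant linear_sum horner_sum; apply: le_trans (ler_norm_sum _ _ _) _.
by apply: ler_sum => le _; rewrite linearZ /= hornerZ normrM.
Qed.

Lemma interpolant_norm_bounded d : bounded_coefs d ->
  exists2 M, 0 <= M & forall f, N (polyH (interpolant d f)) <= M * N f.
Proof.
move=> /(bounded_coefs_weighted (w := fun E : {poly C} => N (polyH E))) [|M M0 hM].
  by move=> E; exact: hnorm_ge0 HA_inner _.
exists M => // f; apply: le_trans (hM f).
rewrite /interpolant linear_sum; apply: le_trans (hnorm_sum_le HA_inner _ _) _.
by apply: ler_sum => le _; rewrite linearZ /= (hnormZ HA_inner).
Qed.

(* The value
   at f is the limit of Lam u along polynomials u approximating f; it exists
   because the discs of center Lam u and radius K ||f - u|| meet pairwise, so
   that (doubling the radii) they have a common point. *)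
Section BoundedExtension.
Variables (Lam : {poly C} -> C) (K : C).
Hypotheses (Lam_lin : forall a u w, Lam (a *: u + w) = a * Lam u + Lam w)
  (K_ge0 : 0 <= K) (Lam_bound : forall u, `|Lam u| <= K * N (polyH u)).

Lemma LamB u w : Lam (u - w) = Lam u - Lam w.
Proof. by rewrite -scaleN1r addrC Lam_lin mulN1r addrC. Qed.

(* Triangle inequality through f: the discs around Lam u meet pairwise. *)
Lemma Lam_lipschitz f u w :
  `|Lam u - Lam w| <= K * N (f - polyH u) + K * N (f - polyH w).
Proof.
rewrite -LamB -mulrDr; apply: le_trans (Lam_bound _) _; rewrite ler_wpM2l //.
have -> : polyH (u - w) = (f - polyH w) - (f - polyH u).
  by rewrite raddfB opprB [RHS]addrC subrKA.
by apply: le_trans (hnormB_le HA_inner _ _) _; rewrite addrC.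
Qed.

Definition limit_value (f : V) (c : C) : Prop :=
  forall e, 0 < e -> exists u, N (f - polyH u) < e /\ `|Lam u - c| < e.

Lemma limit_value_unique f c c' : limit_value f c -> limit_value f c' -> c = c'.
Proof.
move=> hc hc'; apply/eqP; rewrite -subr_eq0 -normr_le0.
apply: (@le0_small _ _ (2 + K * 2)) => [|e e0]; first by rewrite addr_ge0 ?mulr_ge0.
have [u [fu cu]] := hc _ e0; have [w [fw cw]] := hc' _ e0.
have -> : c - c' = (Lam w - c') - (Lam u - c) + (Lam u - Lam w).
  by ring.
apply: le_trans (ler_normD _ _) _; rewrite mulrDl mulr_natl mulr2n lerD //.
  by apply: le_trans (ler_normB _ _) _; rewrite lerD // ltW.
apply: le_trans (Lam_lipschitz f u w) _.
by rewrite -mulrA mulr_natl mulr2n mulrDr lerD // ler_wpM2l // ltW.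
Qed.

Lemma limit_value_lin a x y c d :
  limit_value x c -> limit_value y d -> limit_value (a *: x + y) (a * c + d).
Proof.
move=> hx hy e e0.
have a1 : 0 <= `|a| + 1 by rewrite addr_ge0 ?normr_ge0.
have [e'0 he'] := small_factor a1 e0; set e' := e / _ in e'0 he'.
have comb (X Y : C) : 0 <= X -> X < e' -> Y < e' -> `|a| * X + Y < e.
  move=> X0 Xe Ye; apply: le_lt_trans he'; rewrite mulrDl mul1r.
  by rewrite lerD ?ler_wpM2l ?normr_ge0 // ltW.
have [u [xu cu]] := hx _ e'0; have [w [yw dw]] := hy _ e'0.
exists (a *: u + w); split.
  rewrite polyH_is_linear opprD addrACA -scalerBr.
  apply: le_lt_trans (hnormD_le HA_inner _ _) _; rewrite (hnormZ HA_inner).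
  by rewrite comb // (hnorm_ge0 HA_inner).
rewrite Lam_lin opprD addrACA -mulrBr; apply: le_lt_trans (ler_normD _ _) _.
by rewrite normrM comb ?normr_ge0.
Qed.

Lemma center_exists f : exists c, forall u, `|Lam u - c| <= 2 * (K * N (f - polyH u)).
Proof.
apply: (disc_center 0 (a := Lam) (d := fun u => K * N (f - polyH u))).
  by move=> u; rewrite mulr_ge0 ?(hnorm_ge0 HA_inner).
exact: Lam_lipschitz.
Qed.

Lemma limit_value_center f c :
  (forall u, `|Lam u - c| <= 2 * (K * N (f - polyH u))) -> limit_value f c.
Proof.
move=> hc e e0.
have K2 : 0 <= 2 * K by rewrite mulr_ge0.
have [e'0 he'] := small_factor K2 e0; set e' := e / _ in e'0 he'.
have [u fu] := polyH_dense f e'0; exists u; split.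
  apply: lt_le_trans fu _; rewrite ler_pdivrMr ?ltr_wpDl //.
  by apply: ler_peMr; rewrite ?(ltW e0) // lerDr.
apply: le_lt_trans (hc u) _; rewrite mulrA; apply: le_lt_trans he'.
by rewrite ler_wpM2l // ltW.
Qed.

Lemma bounded_extension : exists L : V -> C,
  [/\ forall a x y, L (a *: x + y) = a * L x + L y,
      exists M, forall x, `|L x| <= M * N x &
      forall u, L (polyH u) = Lam u].
Proof.
pose L f := projT1 (cid (center_exists f)).
have Lc f u : `|Lam u - L f| <= 2 * (K * N (f - polyH u)) by rewrite /L; case: cid.
have Llim f : limit_value f (L f) := limit_value_center (Lc f).
exists L; split.
- by move=> a x y; apply: limit_value_unique (Llim _) (limit_value_lin a (Llim x) (Llim y)).
- exists (2 * K) => x; have := Lc x 0.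
  by rewrite -(subrr 0) LamB raddfB !subrr subr0 sub0r normrN mulrA.
- move=> u; apply: limit_value_unique (Llim _) _ => e e0; exists u.
  by rewrite !subrr (hnorm0 HA_inner) normr0.
Qed.

End BoundedExtension.

Lemma pclos_annihilator p (L : V -> C) M x :
  (forall a x y, L (a *: x + y) = a * L x + L y) -> (forall x, `|L x| <= M * N x) ->
  (forall r, L (polyH (r * p)) = 0) -> pclos p x -> L x = 0.
Proof.
move=> Llin LM Lp px; apply/eqP; rewrite -normr_le0.
apply: (@le0_small _ _ `|M|) => [|e /px [r hr]]; first exact: normr_ge0.
have -> : L x = L (x - polyH (r * p)) by rewrite -scaleN1r addrC Llin Lp mulr0 add0r.
apply: le_trans (ler_norm_coef (normr_real _) (hnorm_ge0 HA_inner _) (LM _)) _.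
by rewrite ler_wpM2l ?normr_ge0 // ltW.
Qed.

(* If [p] contains q then R(p) <= R(q): the functional reproducing the order
   Rmult q b at b kills [p] but not q otherwise. *)
Lemma Rmult_le_of_pclos p q b : p != 0 -> q != 0 -> pclos p (polyH q) ->
  (Rmult Om ip ev p b <= Rmult Om ip ev q b)%N.
Proof.
move=> pn0 qn0 pq; rewrite leqNgt; apply/negP => lt_qp.
have [le_qm _ nrq] := Rmult_spec q b; have [le_pm rp _] := Rmult_spec p b.
set k := Rmult Om ip ev q b in lt_qp le_qm nrq.
have rk := rp k lt_qp; have [L [Llin [M LM] Lrep]] := rk.
have mq : mup b q = k.
  apply/eqP; rewrite eqn_leq le_qm andbT leqNgt; apply/negP => lt_km.
  exact: nrq lt_km rk.
have Lp r : L (polyH (r * p)) = 0.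
  rewrite (Lrep _ _ (polyH_rep _)) (@dvd_derivn_eq0 _ b (mup b p)) //.
    by rewrite dvdp_mull // -mup_geq.
  exact: leq_trans lt_qp le_pm.
have := derivn_mup_neq0 b qn0; rewrite mq -(Lrep _ _ (polyH_rep q)).
by rewrite (pclos_annihilator Llin LM Lp pq) eqxx.
Qed.

Definition root_poly (s : seq C) : {poly C} := \prod_(x <- s) ('X - x%:P).

Definition repro_multiset (s : seq C) : Prop :=
  forall b j, (j < count_mem b s)%N -> reproducible Om ip ev b j.

Lemma root_poly_neq0 s : root_poly s != 0.
Proof. exact/monic_neq0/monic_prod_XsubC. Qed.

Lemma mup_root_poly b s : mup b (root_poly s) = count_mem b s.
Proof. exact: mu_prod_XsubC. Qed.

Lemma interpolation_cons a s d : reproducible Om ip ev a (count_mem a s) ->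
  bounded_coefs d -> (forall u, root_poly s %| u - interpolant d (polyH u)) ->
  exists d', bounded_coefs d' /\
    forall u, root_poly (a :: s) %| u - interpolant d' (polyH u).
Proof.
set k := count_mem a s; set g := root_poly s.
move=> [L [Llin [M LM] Lrep]] bd dvd_d.
have mk : mup a g = k := mup_root_poly a s.
have [c cn0 hc] := derivn_mup_mul a (root_poly_neq0 s).
pose ln f := (L f - ((interpolant d f)^`(k)).[a]) / c.
exists ((ln, g) :: d); split=> [le [<-|/bd //]|u] /=.
  have [M' _ hM'] := interpolant_derivn_bounded a k bd.
  apply: (@bounded_funP _ ((M + M') / `|c|)) => f.
  rewrite /ln normrM normfV mulrAC ler_pM2r ?invr_gt0 ?normr_gt0 // mulrDl.
  by apply: le_trans (ler_normB _ _) (lerD _ _).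
set T := interpolant d (polyH u).
have ln_u : ln (polyH u) = ((u - T) %/ g).[a].
  rewrite /ln (Lrep _ _ (polyH_rep u)) -mk (derivn_mod hc (dvd_d u)).
  by rewrite addrC addKr mulrC mulKf.
have -> : u - interpolant ((ln, g) :: d) (polyH u) = ((u - T) %/ g - (ln (polyH u))%:P) * g.
  rewrite {1}/interpolant big_cons -/(interpolant d (polyH u)) -/T mulrBl divpK ?dvd_d //.
  by rewrite mul_polyC opprD addrA addrAC.
rewrite /root_poly big_cons -/g dvdp_mul2r ?root_poly_neq0 // dvdp_XsubCl.
by rewrite /root hornerD hornerN hornerC ln_u subrr.
Qed.

Lemma interpolation s : repro_multiset s -> exists d, bounded_coefs d /\
  forall u, root_poly s %| u - interpolant d (polyH u).
Proof.
elim: s => [|a s IH] rs.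
  by exists [::]; split=> [le []|u]; rewrite /root_poly big_nil dvd1p.
have [|d [bd dvd_d]] := IH.
  by move=> b j lt_j; apply: rs; apply: leq_trans lt_j _; rewrite /= leq_addl.
by apply: interpolation_cons bd dvd_d; apply: rs; rewrite /= eqxx.
Qed.

Lemma not_pclos_gap v x : ~ pclos v x ->
  exists2 e, 0 < e & forall r, e <= N (x - polyH (r * v)).
Proof.
move=> nx; apply: contrapT => ngap; apply: nx => e e0; apply: contrapT => nr.
apply: ngap; exists e => // r.
rewrite (real_leNgt (gtr0_real e0) (hnorm_real HA_inner _)).
by apply/negP => lt; apply: nr; exists r.
Qed.

Lemma eval_gap_bound g b e :
  (forall r, e <= N (polyH g - polyH (r * (g * ('X - b%:P))))) ->
  forall r, `|r.[b]| * e <= N (polyH (r * g)).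
Proof.
move=> gap r; have [rb0|rbn0] := eqVneq r.[b] 0.
  by rewrite rb0 normr0 mul0r (hnorm_ge0 HA_inner).
have /factor_theorem [r1 r1E] : root (r - r.[b]%:P) b.
  by rewrite /root hornerD hornerN hornerC subrr.
have -> : r * g = r.[b] *: (g - (- (r.[b]^-1 *: r1)) * (g * ('X - b%:P))).
  rewrite mulNr opprK scalerDr -scalerAl scalerA mulfV // scale1r.
  rewrite -{1}(subrK r.[b]%:P r) r1E mulrDl mul_polyC addrC; congr (_ + _).
  by rewrite mulrAC mulrA.
by rewrite linearZ /= (hnormZ HA_inner) raddfB ler_wpM2l ?normr_ge0.
Qed.

(* Under the gap condition at b, the functional u |-> u^(m)(b), m the
   multiplicity of b in s, is bounded on the polynomials: modulo
   g = root_poly s, u is its (bounded) interpolant plus a multiple s0 g, whose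
   contribution c s0(b) is controlled by eval_gap_bound. *)
Lemma derivn_bounded_of_gap s b e : repro_multiset s -> 0 < e ->
  (forall r, e <= N (polyH (root_poly s) - polyH (r * (root_poly s * ('X - b%:P))))) ->
  exists2 K, 0 <= K & forall u, `|(u^`(count_mem b s)).[b]| <= K * N (polyH u).
Proof.
move=> rs e0 gap; set g := root_poly s.
have [d [bd dvd_d]] := interpolation rs.
have [M1 M10 hM1] := interpolant_derivn_bounded b (count_mem b s) bd.
have [M2 M20 hM2] := interpolant_norm_bounded bd.
have [c cn0 hc] := derivn_mup_mul b (root_poly_neq0 s).
exists (M1 + `|c| * ((1 + M2) / e)) => [|u].
  by rewrite addr_ge0 // mulr_ge0 // divr_ge0 ?addr_ge0 // ltW.
set T := interpolant d (polyH u); set s0 := (u - T) %/ g.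
have s0b : `|s0.[b]| <= (1 + M2) / e * N (polyH u).
  rewrite mulrAC ler_pdivlMr //; apply: le_trans (eval_gap_bound gap s0) _.
  rewrite divpK ?dvd_d // raddfB mulrDl mul1r.
  by apply: le_trans (hnormB_le HA_inner _ _) _; rewrite lerD2l hM2.
rewrite -(mup_root_poly b s) (derivn_mod hc (dvd_d u)) mup_root_poly -/T -/s0.
apply: le_trans (ler_normD _ _) _; rewrite mulrDl lerD ?hM1 //.
by rewrite normrM -mulrA ler_wpM2l ?normr_ge0.
Qed.

(* Key lemma: a root b that is not reproducible of order count_mem b s can
   be dropped, [root_poly s * ('X - b)] contains root_poly s; otherwise the
   bounded extension of u |-> u^(m)(b) would make b reproducible of order m. *)
Lemma nonrepro_absorbed s b : repro_multiset s ->
  ~ reproducible Om ip ev b (count_mem b s) ->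
  pclos (root_poly s * ('X - b%:P)) (polyH (root_poly s)).
Proof.
move=> rs nrb; apply: contrapT => /not_pclos_gap [e e0 gap]; apply: nrb.
have [K K0 hK] := derivn_bounded_of_gap rs e0 gap.
have lin a u w : ((a *: u + w)^`(count_mem b s)).[b]
    = a * (u^`(count_mem b s)).[b] + (w^`(count_mem b s)).[b].
  by rewrite derivnD derivnZ hornerD hornerZ.
have [L [Llin LM LF]] := bounded_extension lin K0 hK.
by exists L; split=> // p f /represents_polyH ->.
Qed.

Lemma pclos_root_split s t c : repro_multiset s -> c != 0 ->
  (forall b, b \in t -> ~ reproducible Om ip ev b (count_mem b s)) ->
  pclos (c *: (root_poly s * root_poly t)) = pclos (root_poly s).
Proof.
move=> rs cn0 nrt; rewrite pclosZ // mulrC pclos_absorb //.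
elim: t nrt => [|x t IH] nrt; first by rewrite /root_poly big_nil mul1r; exact: pclos_self.
rewrite /root_poly big_cons -mulrA.
apply: pclos_trans (pclos_mul _ (IH _)) _ => [b bt|].
  by apply: nrt; rewrite inE bt orbT.
by rewrite mulrC; apply: nonrepro_absorbed => //; apply: nrt; rewrite mem_head.
Qed.

Lemma root_split p : p != 0 -> exists s t c,
  [/\ c != 0, p = c *: (root_poly s * root_poly t),
      forall b, count_mem b s = Rmult Om ip ev p b, repro_multiset s &
      forall b, b \in t -> ~ reproducible Om ip ev b (count_mem b s)].
Proof.
move=> pn0; have [r pE] := closed_field_poly_normal p.
have cn0 : lead_coef p != 0 by rewrite lead_coef_eq0.
have mup_p b : mup b p = count_mem b r.
  rewrite {1}pE -mul_polyC mupM ?polyC_eq0 ?root_poly_neq0 // mupNroot ?rootC //.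
  exact: mup_root_poly.
have [s [t [perm_r cnt_s]]] : exists s t,
    perm_eq r (s ++ t) /\ forall b, count_mem b s = Rmult Om ip ev p b.
  by apply: split_count => b; rewrite -mup_p; case: (Rmult_spec p b).
exists s, t, (lead_coef p); split=> //.
- by rewrite {1}pE (perm_big _ perm_r) big_cat.
- by move=> b j; rewrite cnt_s; case: (Rmult_spec p b) => _ + _; apply.
- move=> b bt; rewrite cnt_s; case: (Rmult_spec p b) => _ _; apply.
  rewrite mup_p (permP perm_r) count_cat cnt_s -[X in (X < _)%N]addn0 ltn_add2l.
  by rewrite -has_count has_pred1.
Qed.
End Setting.

Theorem mainTheorem8 (R : realType) (Om : set (CC R)) (V : lmodType (CC R))
    (ip : V -> V -> CC R) (ev : V -> CC R -> CC R) (S : V -> V)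
    (HA : standing_assumptions Om ip ev S)
    (p q : {poly CC R}) (fp fq : V) :
  p != 0 -> q != 0 -> represents Om ev fp p -> represents Om ev fq q ->
  (cyc ip S fp = cyc ip S fq <->
   (forall beta : CC R, Rmult Om ip ev p beta = Rmult Om ip ev q beta)).
Proof.
move=> pn0 qn0 /(cyc_pclos HA) -> /(cyc_pclos HA) ->; split=> [pq b|Rpq].
  have q_in_p : pclos HA p (polyH HA q) by rewrite pq; exact: pclos_self.
  have p_in_q : pclos HA q (polyH HA p) by rewrite -pq; exact: pclos_self.
  apply/eqP; rewrite eqn_leq (Rmult_le_of_pclos b pn0 qn0 q_in_p).
  exact: Rmult_le_of_pclos b qn0 pn0 p_in_q.
have [s [t [c [cn0 pE cnt_s rs nrt]]]] := root_split HA pn0.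
have [s' [t' [c' [cn0' qE cnt_s' rs' nrt']]]] := root_split HA qn0.
have perm_s : perm_eq s' s by apply/allP => b _ /=; rewrite cnt_s cnt_s' Rpq.
rewrite pE qE !pclos_root_split //.
by rewrite /root_poly (perm_big _ perm_s).
Qed.
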